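(* Let $G=(U,V,E)$ be a path-restricted ordered bipartite graph and let $x$ be a vertex of $G$. Two forward paths starting at $x$ in the same direction (both with increasing orders, or both with decreasing orders) never meet again: if both reach a common vertex $y\neq x$, then their subpaths from $x$ to $y$ coincide.
   Context: An ordered bipartite graph is $G=(U,V,E)$ where $U,V$ are disjoint finite sets, each carrying a strict total order (both written $<$), and $E\subseteq U\times V$. A path is a sequence of edges in which consecutive edges share a vertex. A path visiting the vertices of $U$ in the order $u_1,\dots,u_k$ and those of $V$ in the order $v_1,\dots,v_l$ is a forward path if either $u_1<\dots<u_k$ and $v_1<\dots<v_l$, or $u_1>\dots>u_k$ and $v_1>\dots>v_l$. For $x\le y$ in $U$ write $\langle x,y\rangle=\{u\in U: x\le u\le y\}$, and similarly in $V$. If $u_a<u_b$ are the smallest and largest $U$-vertices and $v_c<v_d$ the smallest and largest $V$-vertices of a forward path $P$, the range of $P$ is $\{\langle u_a,u_b\rangle,\langle v_c,v_d\rangle\}$. A vertex of $P$ is non-terminal if it is adjacent along $P$ to two vertices of $P$. An edge is a back edge to $P$ if either it is $(u_a,v_j)$ with $v_j\in\langle v_c,v_d\rangle$ and $v_j>v'$ for some non-terminal vertex $v'\in V$ of $P$, or it is $(u_i,v_c)$ with $u_i\in\langle u_a,u_b\rangle$ and $u_i>u'$ for some non-terminal vertex $u'\in U$ of $P$. $G$ is a path-restricted ordered bipartite graph (PRBG) if no forward path in $G$ has a back edge in $E$. *)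

(* Ordered bipartite graphs: U = 'I_m, V = 'I_n with their
   natural strict orders (any finite strict total order is isomorphic to an
   ordinal), edges E : U -> V -> bool. *)
From mathcomp Require Import all_boot all_order.
Set Implicit Arguments. Unset Strict Implicit. Unset Printing Implicit Defensive.

Section OBG.
Variables (m n : nat) (E : 'I_m -> 'I_n -> bool).

Definition vert := ('I_m + 'I_n)%type.

Definition getU (w : vert) : option 'I_m := if w is inl u then Some u else None.
Definition getV (w : vert) : option 'I_n := if w is inr v then Some v else None.

Definition adj (x y : vert) : bool :=
  match x, y with
  | inl u, inr v => E u v
  | inr v, inl u => E u v
  | _, _ => false
  end.

Definition is_path (P : seq vert) : bool :=
  if P is x :: s then (0 < size s) && path adj x s else false.

Definition Uvs (P : seq vert) : seq 'I_m := pmap getU P.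
Definition Vvs (P : seq vert) : seq 'I_n := pmap getV P.

Definition forward_dir (inc : bool) (P : seq vert) : bool :=
  is_path P &&
  (if inc then sorted (fun a b : 'I_m => a < b) (Uvs P)
               && sorted (fun a b : 'I_n => a < b) (Vvs P)
   else sorted (fun a b : 'I_m => b < a) (Uvs P)
               && sorted (fun a b : 'I_n => b < a) (Vvs P)).

Definition forward_path (P : seq vert) : bool :=
  forward_dir true P || forward_dir false P.

(* w is non-terminal in P: adjacent along P to two vertices of P *)
Definition nonterminal (P : seq vert) (w : vert) : Prop :=
  exists i, 0 < i /\ i.+1 < size P /\ nth w P i = w.

Definition minU (P : seq vert) (ua : 'I_m) : Prop :=
  ua \in Uvs P /\ forall u, u \in Uvs P -> ua <= u.
Definition maxU (P : seq vert) (ub : 'I_m) : Prop :=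
  ub \in Uvs P /\ forall u, u \in Uvs P -> u <= ub.
Definition minV (P : seq vert) (vc : 'I_n) : Prop :=
  vc \in Vvs P /\ forall v, v \in Vvs P -> vc <= v.
Definition maxV (P : seq vert) (vd : 'I_n) : Prop :=
  vd \in Vvs P /\ forall v, v \in Vvs P -> v <= vd.

Definition back_edge (P : seq vert) (u : 'I_m) (v : 'I_n) : Prop :=
  (exists ua vc vd, [/\ minU P ua, minV P vc, maxV P vd, u = ua &
      (vc <= v <= vd) /\
      exists v' : 'I_n, nonterminal P (inr v') /\ v' < v])
  \/
  (exists ua ub vc, [/\ minU P ua, maxU P ub, minV P vc, v = vc &
      (ua <= u <= ub) /\
      exists u' : 'I_m, nonterminal P (inl u') /\ u' < u]).

Definition PRBG : Prop :=
  forall P, forward_path P -> forall u v, E u v -> ~ back_edge P u v.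

End OBG.

From mathcomp Require Import all_boot all_order.
Set Implicit Arguments. Unset Strict Implicit. Unset Printing Implicit Defensive.

(* Suppose two increasing forward paths leave a common vertex u0 towards
   distinct neighbours a < b and meet again at q; transposing U and V, we may
   assume u0 is in U.  Let vd be the largest V-vertex of the path through a.
   If b <= vd, then (u0, b) is a back edge to that path: u0 is its least
   U-vertex and its non-terminal vertex a lies below b.  Otherwise the path
   through a stays below b in V, so q is in U; prolonging the path through b
   backwards by the edge (a, u0) yields a forward path with U-range [u0, q]
   and least V-vertex a, and the edge from a to its successor a' > u0 on the
   first path is a back edge to it.  So forward paths in the same direction
   with common endpoints coincide; decreasing paths are handled by reversal. *)

Local Notation ord_lt k := (fun a b : 'I_k => a < b).

Lemma pmap_rev (T1 T2 : Type) (f : T1 -> option T2) s :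
  pmap f (rev s) = rev (pmap f s).
Proof.
elim: s => // a s IH; rewrite rev_cons -cats1 pmap_cat IH /=.
by case: (f a) => [b|] /=; rewrite ?cats0 // rev_cons cats1.
Qed.

Lemma take_index_rcons (T : eqType) (y : T) s :
  y \in s -> take (index y s).+1 s = rcons (take (index y s) s) y.
Proof. by move=> ys; rewrite (take_nth y) ?index_mem ?nth_index. Qed.

Section SortedOrdinals.
Variable k : nat.

Lemma ord_lt_trans : transitive (ord_lt k).
Proof. by move=> y x z; apply: ltn_trans. Qed.

Lemma sorted_ord_min (x : 'I_k) s : sorted (ord_lt k) (x :: s) ->
  x \in x :: s /\ forall z, z \in x :: s -> x <= z.
Proof.
move=> /(order_path_min ord_lt_trans)/allP xs.
by split=> [|z]; rewrite ?mem_head // in_cons => /predU1P [->|/xs/ltnW].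
Qed.

Lemma sorted_ord_max (y : 'I_k) s : sorted (ord_lt k) (rcons s y) ->
  y \in rcons s y /\ forall z, z \in rcons s y -> z <= y.
Proof.
have gt_trans : transitive (fun a b : 'I_k => b < a).
  by move=> y' x z xy zy; apply: ord_lt_trans zy xy.
rewrite -rev_sorted rev_rcons /= => /(order_path_min gt_trans)/allP ys.
split=> [|z]; rewrite ?mem_rcons ?mem_head // in_cons => /predU1P [->//|zs].
by apply/ltnW/ys; rewrite mem_rev.
Qed.

End SortedOrdinals.

Section OrderedBipartiteGraph.
Variables (m n : nat) (E : 'I_m -> 'I_n -> bool).
Implicit Types (P s : seq (vert m n)) (x : vert m n).

Lemma forward_incE P : forward_dir E true P =
  [&& is_path E P, sorted (ord_lt m) (Uvs P) & sorted (ord_lt n) (Vvs P)].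
Proof. by []. Qed.

Lemma Uvs_rcons s u : Uvs (rcons s (inl u)) = rcons (Uvs s) u.
Proof. by rewrite /Uvs -cats1 pmap_cat -cats1. Qed.

Lemma mem_Uvs s u : inl u \in s -> u \in Uvs s.
Proof. by move=> us; rewrite /Uvs mem_pmap; apply/mapP; exists (inl u). Qed.

Lemma mem_Vvs s v : inr v \in s -> v \in Vvs s.
Proof. by move=> vs; rewrite /Vvs mem_pmap; apply/mapP; exists (inr v). Qed.

Lemma maxU_last x s u :
  sorted (ord_lt m) (Uvs (x :: s)) -> last x s = inl u -> maxU (x :: s) u.
Proof.
by move=> + xs_u; rewrite /maxU (lastI x s) xs_u Uvs_rcons; apply: sorted_ord_max.
Qed.

Lemma forward_inc_behead x y s :
  forward_dir E true [:: x, y & s] -> 0 < size s -> forward_dir E true (y :: s).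
Proof.
rewrite !forward_incE /is_path => /and3P [/andP [_ /andP [_ ys]] sU sV] ->.
apply/and3P; split; [exact: ys | clear sV; move: sU | clear sU; move: sV].
  all: by case: x => ? //= /path_sorted.
Qed.

Lemma forward_inc_last_neq x s : forward_dir E true (x :: s) -> last x s != x.
Proof.
rewrite forward_incE => /and3P [/andP [] + _ sU sV].
case: s sU sV => // y s sU sV _; apply/eqP => ys_x.
have x_ys : x \in y :: s by rewrite -[x in x \in _]ys_x /= mem_last.
case: x {ys_x} x_ys sU sV => [u /mem_Uvs u_ys sU _ | v /mem_Vvs v_ys _ sV].
- by have /allP /(_ u u_ys) := order_path_min (@ord_lt_trans m) sU; rewrite ltnn.
- by have /allP /(_ v v_ys) := order_path_min (@ord_lt_trans n) sV; rewrite ltnn.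
Qed.

Lemma head_back_edge (u0 : 'I_m) (a1 v vd : 'I_n) w A :
  forward_dir E true [:: inl u0, inr a1, w & A] ->
  maxV [:: inl u0, inr a1, w & A] vd -> a1 < v <= vd ->
  back_edge [:: inl u0, inr a1, w & A] u0 v.
Proof.
rewrite forward_incE => /and3P [_ sU sV] maxvd /andP [a1v vvd].
left; exists u0, a1, vd; split=> //; first exact: sorted_ord_min sU.
- exact: sorted_ord_min sV.
- by rewrite (ltnW a1v) vvd; split=> //; exists a1; split=> //; exists 1.
Qed.

Lemma prepend_back_edge (a1 b1 : 'I_n) (u0 a2 uq : 'I_m) B :
  forward_dir E true [:: inl u0, inr b1 & B] -> last (inr b1) B = inl uq ->
  E u0 a1 -> a1 < b1 -> u0 < a2 <= uq ->
  forward_path E [:: inr a1, inl u0, inr b1 & B] /\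
  back_edge [:: inr a1, inl u0, inr b1 & B] a2 a1.
Proof.
rewrite forward_incE => /and3P [pB sU sV] B_uq Eu0a1 a1b1 /andP [u0a2 a2uq].
have fB' : forward_dir E true [:: inr a1, inl u0, inr b1 & B].
  by rewrite forward_incE /= Eu0a1 a1b1; apply/and3P.
split; first by rewrite /forward_path fB'.
right; exists u0, uq, a1; split=> //; first exact: sorted_ord_min sU.
- exact: maxU_last sU B_uq.
- by case/and3P: fB' => _ _; apply: sorted_ord_min.
- by rewrite (ltnW u0a2) a2uq; split=> //; exists u0; split=> //; exists 1.
Qed.

Lemma forward_inc_fork_U (u0 : 'I_m) (a1 b1 : 'I_n) A B : PRBG E ->
  forward_dir E true [:: inl u0, inr a1 & A] ->
  forward_dir E true [:: inl u0, inr b1 & B] ->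
  a1 < b1 -> last (inr a1) A != last (inr b1) B.
Proof.
move=> prbg fA fB a1b1; apply/eqP => A_B.
have Eu0b1 : E u0 b1 by case/and3P: fB => /andP [_ /andP []].
have [vd maxvd] : exists vd, maxV [:: inl u0, inr a1 & A] vd.
  case/and3P: (fA) => _ _; rewrite /maxV [Vvs _]/= lastI.
  by move=> /sorted_ord_max; exists (last a1 (Vvs A)).
case: (leqP b1 vd) => [b1vd | vdb1].
  case: A fA {A_B} maxvd => [|w A] fA maxvd.
    case: maxvd; rewrite inE => /eqP vd_a1 _.
    by move: b1vd; rewrite vd_a1 leqNgt a1b1.
  have a1_b1_vd : a1 < b1 <= vd by rewrite a1b1.
  apply: (prbg _ _ _ _ Eu0b1 (head_back_edge fA maxvd a1_b1_vd)).
  by rewrite /forward_path fA.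
case B_q: (last (inr b1) B) A_B => [uq | v] A_B; last first.
  have v_A : inr v \in [:: inl u0, inr a1 & A] by rewrite in_cons -A_B mem_last orbT.
  have v_B : inr v \in [:: inl u0, inr b1 & B] by rewrite in_cons -B_q mem_last orbT.
  have b1v : b1 <= v.
    by case/and3P: fB => _ _ /sorted_ord_min [_]; apply; exact: mem_Vvs v_B.
  by move: b1v; rewrite leqNgt (leq_ltn_trans (maxvd.2 v (mem_Vvs v_A)) vdb1).
case: A fA A_B {maxvd} => [|[a2 | v2] A] fA A_B //; last first.
  by case/and3P: fA => /andP [_ /and3P []].
have [pA sUA _] := and3P fA.
have Ea2a1 : E a2 a1 by case/andP: pA => _ /and3P [].
have Eu0a1 : E u0 a1 by case/andP: pA => _ /and3P [].
have u0a2 : u0 < a2 by case/andP: sUA.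
have u0_a2_uq : u0 < a2 <= uq.
  by rewrite u0a2 (maxU_last sUA A_B).2 // !inE eqxx orbT.
have [fB' be] := prepend_back_edge fB B_q Eu0a1 a1b1 u0_a2_uq.
exact: prbg _ fB' _ _ Ea2a1 be.
Qed.

Lemma adjC : symmetric (adj E).
Proof. by case=> ? []. Qed.

Lemma forward_dir_catl inc s1 s2 :
  forward_dir E inc (s1 ++ s2) -> 1 < size s1 -> forward_dir E inc s1.
Proof.
rewrite /forward_dir /Uvs /Vvs !pmap_cat => /andP [pP sP] s1_gt1; apply/andP; split.
  case: s1 pP s1_gt1 {sP} => // x s1; rewrite /is_path /= cat_path.
  by case/andP=> _ /andP [-> _] s1_gt0; rewrite andbT.
by case: inc sP => /andP [/cat_sorted2 [-> _] /cat_sorted2 [-> _]].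
Qed.

Lemma forward_dir_rev s : forward_dir E false s -> forward_dir E true (rev s).
Proof.
rewrite /forward_dir /Uvs /Vvs !pmap_rev !rev_sorted => /andP [+ ->]; rewrite andbT.
case: s => // x s /andP [s_gt0 pP].
rewrite /is_path (lastI x s) rev_rcons size_rev size_belast s_gt0 /= rev_path.
by apply: etrans pP; apply: eq_path => a b; apply: adjC.
Qed.

Lemma forward_dir_prefix inc x y P : forward_dir E inc (x :: P) -> y \in P ->
  forward_dir E inc (x :: rcons (take (index y P) P) y).
Proof.
move=> fP yP; apply: (forward_dir_catl (s2 := drop (index y P).+1 P)); last first.
  by rewrite /= size_rcons.
by rewrite cat_cons -take_index_rcons // cat_take_drop.
Qed.

End OrderedBipartiteGraph.

Definition vswap {A B : Type} (w : A + B) : B + A :=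
  match w with inl a => inr a | inr b => inl b end.

Lemma vswapK (A B : Type) : cancel (@vswap A B) (@vswap B A).
Proof. by case. Qed.

Definition swapE (m n : nat) (E : 'I_m -> 'I_n -> bool) : 'I_n -> 'I_m -> bool :=
  fun v u => E u v.

Section Transposition.
Variables (m n : nat) (E : 'I_m -> 'I_n -> bool).
Implicit Types (P : seq (vert m n)) (w : vert m n).

Lemma Uvs_swap P : Uvs (map vswap P) = Vvs P.
Proof. by elim: P => [|[u|v] P IH] //; rewrite /Uvs /Vvs /= -/(Uvs _) -/(Vvs _) IH. Qed.

Lemma Vvs_swap P : Vvs (map vswap P) = Uvs P.
Proof. by elim: P => [|[u|v] P IH] //; rewrite /Uvs /Vvs /= -/(Uvs _) -/(Vvs _) IH. Qed.

Lemma adj_swap w1 w2 : adj (swapE E) (vswap w1) (vswap w2) = adj E w1 w2.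
Proof. by case: w1 w2 => ? []. Qed.

Lemma is_path_swap P : is_path (swapE E) (map vswap P) = is_path E P.
Proof.
case: P => // w P; rewrite /is_path /= size_map path_map.
by congr (_ && _); apply: eq_path => ? ?; exact: adj_swap.
Qed.

Lemma forward_dir_swap inc P :
  forward_dir (swapE E) inc (map vswap P) = forward_dir E inc P.
Proof.
by rewrite /forward_dir is_path_swap Uvs_swap Vvs_swap; case: inc; congr (_ && _); rewrite andbC.
Qed.

Lemma nonterminal_swap P w : nonterminal (map vswap P) (vswap w) -> nonterminal P w.
Proof.
case=> i [i_gt0 [iP Pi]]; exists i; rewrite size_map in iP; do 2!split=> //.
by apply: (can_inj (@vswapK _ _)); rewrite -Pi (nth_map w) // ltnW.
Qed.

Lemma back_edge_swap P u v : back_edge (map vswap P) v u -> back_edge P u v.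
Proof.
rewrite /back_edge /minU /maxU /minV /maxV Uvs_swap Vvs_swap.
case=> [[ua [vc [vd [? ? ? -> [? [v' [nt ?]]]]]]] | [ua [ub [vc [? ? ? -> [? [u' [nt ?]]]]]]]].
- right; exists vc, vd, ua; split=> //; split=> //; exists v'.
  by split=> //; exact: (nonterminal_swap (w := inl v') nt).
- left; exists vc, ua, ub; split=> //; split=> //; exists u'.
  by split=> //; exact: (nonterminal_swap (w := inr u') nt).
Qed.

End Transposition.

Lemma PRBG_swap (m n : nat) (E : 'I_m -> 'I_n -> bool) : PRBG E -> PRBG (swapE E).
Proof.
move=> prbg P fP v u Evu be.
rewrite -(mapK (@vswapK _ _) P) in fP be.
apply: (prbg _ _ u v Evu (back_edge_swap be)).
by move: fP; rewrite /forward_path !forward_dir_swap.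
Qed.

Section Uniqueness.
Variables (m n : nat) (E : 'I_m -> 'I_n -> bool).
Hypothesis prbg : PRBG E.
Implicit Types (p a b x y : vert m n) (s A B : seq (vert m n)).

Lemma forward_inc_fork_V (v0 : 'I_n) (a1 b1 : 'I_m) A B :
  forward_dir E true [:: inr v0, inl a1 & A] ->
  forward_dir E true [:: inr v0, inl b1 & B] ->
  a1 < b1 -> last (inl a1) A != last (inl b1) B.
Proof.
rewrite -!(forward_dir_swap E) => fA fB a1b1.
rewrite -(inj_eq (can_inj (@vswapK _ _))) -2!(last_map vswap).
exact: forward_inc_fork_U (PRBG_swap prbg) fA fB a1b1.
Qed.

Lemma forward_inc_fork p a b A B :
  forward_dir E true [:: p, a & A] -> forward_dir E true [:: p, b & B] ->
  a != b -> last a A != last b B.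
Proof.
move=> fA fB; have [/andP [_ /andP [pa _]] _ _] := and3P fA.
have [/andP [_ /andP [pb _]] _ _] := and3P fB.
case: p a b pa pb fA fB => [u0|v0] [a1|a1] [b1|b1] // _ _ fA fB ab.
- case: (ltngtP a1 b1) => [a1b1 | b1a1 | a1b1].
  + exact: forward_inc_fork_U prbg fA fB a1b1.
  + by rewrite eq_sym; exact: forward_inc_fork_U prbg fB fA b1a1.
  + by move: ab; rewrite (val_inj a1b1) eqxx.
- case: (ltngtP a1 b1) => [a1b1 | b1a1 | a1b1].
  + exact: forward_inc_fork_V fA fB a1b1.
  + by rewrite eq_sym; exact: forward_inc_fork_V fB fA b1a1.
  + by move: ab; rewrite (val_inj a1b1) eqxx.
Qed.

Lemma forward_inc_unique p A B :
  forward_dir E true (p :: A) -> forward_dir E true (p :: B) ->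
  last p A = last p B -> A = B.
Proof.
elim: A p B => [|a A IH] p [|b B] fA fB //=; try by [case/andP: fA | case/andP: fB].
move: fB; have [<- {b} fB | ab fB AB] := eqVneq a b; last first.
  by case/eqP: (forward_inc_fork fA fB ab).
case: A B IH fA fB => [|a' A] [|b' B] IH fA fB //= AB; congr (_ :: _).
- by case/eqP: (forward_inc_last_neq (forward_inc_behead fB isT)).
- by case/eqP: (forward_inc_last_neq (forward_inc_behead fA isT)).
- exact: IH (forward_inc_behead fA isT) (forward_inc_behead fB isT) AB.
Qed.

Lemma forward_dir_unique inc x y s1 s2 :
  forward_dir E inc (x :: rcons s1 y) -> forward_dir E inc (x :: rcons s2 y) ->
  s1 = s2.
Proof.
case: inc => [f1 f2 | /forward_dir_rev f1 /forward_dir_rev f2].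
  have := forward_inc_unique f1 f2; rewrite !last_rcons => /(_ erefl).
  by case/rcons_inj.
rewrite !rev_cons !rev_rcons !rcons_cons in f1 f2.
have := forward_inc_unique f1 f2; rewrite !last_rcons => /(_ erefl).
by case/rcons_inj => /(can_inj revK).
Qed.

End Uniqueness.

Theorem lemma4 (m n : nat) (E : 'I_m -> 'I_n -> bool) :
  PRBG E ->
  forall (x y : vert m n) (P1 P2 : seq (vert m n)) (inc : bool),
    forward_dir E inc (x :: P1) -> forward_dir E inc (x :: P2) ->
    y != x -> y \in x :: P1 -> y \in x :: P2 ->
    take (index y (x :: P1)).+1 (x :: P1) = take (index y (x :: P2)).+1 (x :: P2).
Proof.
move=> prbg x y P1 P2 inc f1 f2 yx; rewrite !in_cons (negbTE yx) /= => y1 y2.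
rewrite eq_sym (negbTE yx) /= !take_index_rcons //; congr (_ :: rcons _ _).
exact: (forward_dir_unique prbg (forward_dir_prefix f1 y1) (forward_dir_prefix f2 y2)).
Qed.
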